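(* Consider the fully observable discrete-time system $x_{t+1}=f(x_t,u_t,d_t)$ with $x\in\mathcal{X}$, $u\in\mathcal{U}$, $d\in\mathcal{D}$, failure set $\mathcal{F}\subseteq\mathcal{X}$, a fallback policy $\pi^{\text{shield}}:\mathcal{X}\to\mathcal{U}$, a horizon $H\ge1$, and a terminal safe set $\Omega\subseteq\mathcal{X}$ with $\Omega\cap\mathcal{F}=\emptyset$ that is robustly invariant under $\pi^{\text{shield}}$ (i.e. $f(x,\pi^{\text{shield}}(x),d)\in\Omega$ for all $x\in\Omega$, $d\in\mathcal{D}$). For $x\in\mathcal{X}$, $u\in\mathcal{U}$ define $\hat{\mathcal{X}}_0=\{x\}$, $\hat{\mathcal{X}}_1=\{f(x,u,d):d\in\mathcal{D}\}$, and $\hat{\mathcal{X}}_{\tau+1}=\{f(\hat x,\pi^{\text{shield}}(\hat x),d):\hat x\in\hat{\mathcal{X}}_\tau,d\in\mathcal{D}\}$ for $\tau\ge1$, and the switch-type filter $$\phi(x,u)=\begin{cases}u, & \hat{\mathcal{X}}_\tau\cap\mathcal{F}=\emptyset\ \forall\tau\in\{0,\dots,H\}\ \text{and}\ \hat{\mathcal{X}}_H\subseteq\Omega,\\ \pi^{\text{shield}}(x), & \text{otherwise.}\end{cases}$$ Then for every task policy $\pi^{\text{task}}:\mathcal{X}\to\mathcal{U}$ and every deployment state $x_0\in\Omega$, the system with inputs $u_t=\phi(x_t,\pi^{\text{task}}(x_t))$ satisfies $x_t\notin\mathcal{F}$ for all $t\ge0$ and all disturbance sequences $d_0,d_1,\dots\in\mathcal{D}$.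 *)

From Stdlib Require Import ClassicalDescription.

Set Implicit Arguments.

Section Shield.
Variables (X U D : Type) (f : X -> U -> D -> X) (Dset : D -> Prop)
          (pi_shield : X -> U).

Fixpoint Xhat (x : X) (u : U) (tau : nat) : X -> Prop :=
  match tau with
  | O => fun y => y = x
  | S O => fun y => exists d, Dset d /\ y = f x u d
  | S tau' => fun y => exists xh d, Xhat x u tau' xh /\ Dset d /\
                         y = f xh (pi_shield xh) d
  end.

Definition accept (F Omega : X -> Prop) (H : nat) (x : X) (u : U) : Prop :=
  (forall tau, tau <= H -> forall y, Xhat x u tau y -> ~ F y) /\
  (forall y, Xhat x u H y -> Omega y).

Definition phi (F Omega : X -> Prop) (H : nat) (x : X) (u : U) : U :=
  if excluded_middle_informative (accept F Omega H x u) then u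
  else pi_shield x.

Fixpoint traj (F Omega : X -> Prop) (H : nat) (pi_task : X -> U)
         (x0 : X) (d : nat -> D) (t : nat) : X :=
  match t with
  | O => x0
  | S t' => let xt := traj F Omega H pi_task x0 d t' in
            f xt (phi F Omega H xt (pi_task xt)) (d t')
  end.
End Shield.

From Pilot Require Import Defs.
From Stdlib Require Import Lia ClassicalDescription.

Set Implicit Arguments.
Unset Strict Implicit.

(* The closed loop stays in the set of "certified" states: those in Omega,
   and those lying on some accepted H-step prediction tube at a depth
   1 <= k <= H.  An accepted input starts a new tube at depth 1; otherwise
   the shield is applied, which advances the current tube by one step, and
   at depth H the tube lies inside Omega, whose robust invariance takes over.
   Certified states are never failures, because Omega avoids F and accepted
   tubes avoid F up to depth H. *)

Section ShieldedClosedLoop.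
Variables (X U D : Type) (f : X -> U -> D -> X) (Dset : D -> Prop)
          (F : X -> Prop) (pi_shield : X -> U) (H : nat) (Omega : X -> Prop).

Local Notation Xhat := (Xhat f Dset pi_shield).
Local Notation accept := (accept f Dset pi_shield F Omega H).
Local Notation phi := (phi f Dset pi_shield F Omega H).

Lemma Xhat1 x u d : Dset d -> Xhat x u 1 (f x u d).
Proof. intros Hd. simpl. eauto. Qed.

Lemma XhatS x u k y d : 1 <= k -> Xhat x u k y -> Dset d ->
  Xhat x u (S k) (f y (pi_shield y) d).
Proof.
  intros Hk Hy Hd. destruct k as [|k]; [lia|].
  simpl. exists y, d. auto.
Qed.

Lemma phi_accept x u : accept x u -> phi x u = u.
Proof.
  intros Ha. unfold Defs.phi.
  destruct (excluded_middle_informative _); [reflexivity | contradiction].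
Qed.

Lemma phi_reject x u : ~ accept x u -> phi x u = pi_shield x.
Proof.
  intros Ha. unfold Defs.phi.
  destruct (excluded_middle_informative _); [contradiction | reflexivity].
Qed.

Definition certified (x : X) : Prop :=
  Omega x \/
  exists x' u' k, 1 <= k <= H /\ accept x' u' /\ Xhat x' u' k x.

Hypothesis Omega_safe : forall x, Omega x -> ~ F x.
Hypothesis Omega_invariant :
  forall x d, Omega x -> Dset d -> Omega (f x (pi_shield x) d).

Lemma certified_safe x : certified x -> ~ F x.
Proof.
  intros [Hx | (x' & u' & k & Hk & [Hsafe _] & Hx)].
  - exact (Omega_safe Hx).
  - apply (Hsafe k); [lia | exact Hx].
Qed.

Lemma certified_accept_step x u d : 1 <= H -> accept x u -> Dset d ->
  certified (f x u d).
Proof.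
  intros HH Ha Hd. right. exists x, u, 1.
  split; [lia|]. split; [exact Ha | exact (Xhat1 x u Hd)].
Qed.

Lemma certified_shield_step x d : certified x -> Dset d ->
  certified (f x (pi_shield x) d).
Proof.
  intros [Hx | (x' & u' & k & Hk & Ha & Hx)] Hd.
  - left. exact (Omega_invariant Hx Hd).
  - destruct (PeanoNat.Nat.eq_dec k H) as [-> | Hne].
    + left. apply Omega_invariant; [apply (proj2 Ha); exact Hx | exact Hd].
    + right. exists x', u', (S k).
      split; [lia|]. split; [exact Ha | apply XhatS; [lia | exact Hx | exact Hd]].
Qed.

Lemma certified_phi_step x u d : 1 <= H -> certified x -> Dset d ->
  certified (f x (phi x u) d).
Proof.
  intros HH Hx Hd.
  destruct (classic (accept x u)) as [Ha | Ha].
  - rewrite (phi_accept Ha). exact (certified_accept_step HH Ha Hd).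
  - rewrite (phi_reject Ha). exact (certified_shield_step Hx Hd).
Qed.

Lemma traj_certified pi_task x0 d : 1 <= H -> Omega x0 ->
  (forall t, Dset (d t)) ->
  forall t, certified (traj f Dset pi_shield F Omega H pi_task x0 d t).
Proof.
  intros HH H0 Hd t. induction t as [|t IH]; simpl.
  - left. exact H0.
  - exact (certified_phi_step _ HH IH (Hd t)).
Qed.

End ShieldedClosedLoop.

Theorem corollary3 (X U D : Type) (f : X -> U -> D -> X) (Dset : D -> Prop)
  (F : X -> Prop) (pi_shield : X -> U) (H : nat) (Omega : X -> Prop)
  (HH : 1 <= H)
  (HOmegaF : forall x, Omega x -> ~ F x)
  (Hinv : forall x d, Omega x -> Dset d -> Omega (f x (pi_shield x) d)) :
  forall (pi_task : X -> U) (x0 : X), Omega x0 ->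
  forall (d : nat -> D), (forall t, Dset (d t)) ->
  forall t, ~ F (traj f Dset pi_shield F Omega H pi_task x0 d t).
Proof.
  intros pi_task x0 H0 d Hd t.
  eapply certified_safe; [exact HOmegaF |].
  exact (traj_certified F Hinv pi_task HH H0 Hd t).
Qed.
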